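(* Let $M$ be a preordered commutative monoid (written multiplicatively, with unit $1$) such that $x\ge 1$ for all $x\in M$, and let $g\in M$ be a generator. For $x,y\in M$ and $r\in\mathbb{R}_{\ge 0}$ the following are equivalent: (1) $r$ is a regularized rate from $x$ to $y$; (2) for every $\delta>0$ there exists $n\in\mathbb{N}$, $n\ge 1$, such that $x^n g^{\lfloor\delta n\rfloor}\ge y^{\lceil rn\rceil}$.
   Context: A preordered commutative monoid is a set $M$ with an associative, commutative binary operation with neutral element $1$, and a reflexive transitive relation $\le$ such that $x\ge y$ implies $xz\ge yz$ for all $x,y,z$. An element $g\in M$ is a generator if for every $x\in M$ there is $n\in\mathbb{N}$ with $g^n\ge x$. Given a generator $g$, a number $r\in\mathbb{R}_{\ge0}$ is a regularized rate from $x$ to $y$ if for every $\delta>0$ and every neighbourhood $U$ of $r$ there are $m,n\in\mathbb{N}$ with $\frac{m}{n}\in U$ and $d\in\mathbb{N}$ with $d\le\delta\max(m,n)$ such that $x^n g^d\ge y^m$. *)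

From Stdlib Require Import Reals Lra Lia.
Open Scope R_scope.

(* A preordered commutative monoid (written multiplicatively).
   [pcm_le x y] means x <= y, so "x >= y" is [pcm_le y x]. *)
Record PCMonoid := {
  pcm_car :> Type;
  pcm_mul : pcm_car -> pcm_car -> pcm_car;
  pcm_one : pcm_car;
  pcm_le : pcm_car -> pcm_car -> Prop;
  pcm_mulA : forall x y z, pcm_mul x (pcm_mul y z) = pcm_mul (pcm_mul x y) z;
  pcm_mulC : forall x y, pcm_mul x y = pcm_mul y x;
  pcm_mul1 : forall x, pcm_mul pcm_one x = x;
  pcm_refl : forall x, pcm_le x x;
  pcm_trans : forall x y z, pcm_le x y -> pcm_le y z -> pcm_le x z;
  pcm_mono : forall x y z, pcm_le y x -> pcm_le (pcm_mul y z) (pcm_mul x z)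
}.

Arguments pcm_mul {_} _ _.
Arguments pcm_one {_}.
Arguments pcm_le {_} _ _.

Fixpoint pcm_pow {M : PCMonoid} (x : M) (n : nat) : M :=
  match n with
  | O => pcm_one
  | S k => pcm_mul x (pcm_pow x k)
  end.

Definition pcm_ge {M : PCMonoid} (x y : M) : Prop := pcm_le y x.

Definition is_generator {M : PCMonoid} (g : M) : Prop :=
  forall x : M, exists n : nat, pcm_ge (pcm_pow g n) x.

(* r is a regularized rate from x to y (w.r.t. generator g).  A neighbourhood
   U of r in R is rendered by the open balls (r - eps, r + eps), eps > 0;
   m/n is only meaningful for n >= 1. *)
Definition regularized_rate {M : PCMonoid} (g x y : M) (r : R) : Prop :=
  forall delta : R, 0 < delta ->
  forall eps : R, 0 < eps ->
  exists m n : nat, (0 < n)%nat /\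
    Rabs (INR m / INR n - r) < eps /\
    exists d : nat, INR d <= delta * INR (Nat.max m n) /\
      pcm_ge (pcm_mul (pcm_pow x n) (pcm_pow g d)) (pcm_pow y m).

(* floor and ceiling as natural numbers (for nonnegative arguments).
   Int_part t = up t - 1 is the floor of t. *)
Definition nat_floor (t : R) : nat := Z.to_nat (Int_part t).
Definition nat_ceil (t : R) : nat := Z.to_nat (- Int_part (- t)).

From Stdlib Require Import Reals Lra Lia ZArith.
Open Scope R_scope.

(* Write [achieves N d m] for  x^N g^d >= y^m.  Because every
   element is >= 1, [achieves] is monotone: more x's, more g's or fewer y's
   preserve it.  It is stable under raising everything to a power t, and a
   y-deficit of e can be paid for with k*e extra g's, where g^k >= y.

   (1) -> (2): pick a rate witness x^n g^d >= y^m with m/n close to r and d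
   small relative to n; raise it to a fixed large power t and pay for the
   missing ceil(r t n) - t m copies of y with g's.  The resulting exponent of
   g stays below delta t n, the additive constant k being absorbed since t
   is chosen with k << t delta.
   (2) -> (1): raise the witness x^n g^floor(delta n) >= y^ceil(r n) to a
   power k with 1/k < eps; then m = floor(r k n) gives the ratio m/(kn)
   within 1/(kn) < eps of r, and the g-exponent k floor(delta n) <= delta k n. *)

Lemma nat_floor_spec (t : R) :
  0 <= t -> INR (nat_floor t) <= t /\ t < INR (nat_floor t) + 1.
Proof.
  intros Ht. unfold nat_floor. destruct (base_Int_part t) as [Hlo Hhi].
  assert (Hpos : (-1 < Int_part t)%Z) by (apply lt_IZR; simpl; lra).
  rewrite INR_IZR_INZ, Z2Nat.id by lia. lra.
Qed.

Lemma nat_ceil_spec (t : R) :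
  0 <= t -> t <= INR (nat_ceil t) /\ INR (nat_ceil t) < t + 1.
Proof.
  intros Ht. unfold nat_ceil. destruct (base_Int_part (- t)) as [Hlo Hhi].
  assert (Hopp : IZR (- Int_part (- t)) = - IZR (Int_part (- t))) by apply opp_IZR.
  assert (Hpos : (0 <= - Int_part (- t))%Z) by (apply le_IZR; lra).
  rewrite INR_IZR_INZ, Z2Nat.id by lia. lra.
Qed.

Lemma le_nat_floor (D : nat) (a : R) : 0 <= a -> INR D <= a -> (D <= nat_floor a)%nat.
Proof.
  intros Ha HD. destruct (nat_floor_spec a Ha) as [_ Hhi].
  assert (Hlt : INR D < INR (S (nat_floor a))) by (rewrite S_INR; lra).
  apply INR_lt in Hlt. lia.
Qed.

Lemma exists_nat_gt (a : R) : exists k : nat, a < INR k.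
Proof.
  destruct (archimed (Rmax a 0)) as [Hup _].
  assert (Hpos : 0 < IZR (up (Rmax a 0))) by (generalize (Rmax_r a 0); lra).
  apply lt_0_IZR in Hpos. exists (Z.to_nat (up (Rmax a 0))).
  rewrite INR_IZR_INZ, Z2Nat.id by lia. generalize (Rmax_l a 0); lra.
Qed.

Lemma floor_ratio_close (r eps : R) (N : nat) :
  0 <= r -> 1 < eps * INR N ->
  Rabs (INR (nat_floor (r * INR N)) / INR N - r) < eps.
Proof.
  intros Hr HN.
  assert (HN0 : 0 < INR N) by (destruct N; simpl in HN; [lra | apply lt_0_INR; lia]).
  destruct (nat_floor_spec (r * INR N)) as [Hlo Hhi]; [nra |].
  set (m := nat_floor (r * INR N)) in *.
  assert (Hdiff : INR m / INR N - r = - ((r * INR N - INR m) / INR N))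
    by (field; lra).
  rewrite Hdiff, Rabs_Ropp, Rabs_pos_eq.
  - apply (Rmult_lt_reg_r (INR N)); [lra |].
    replace ((r * INR N - INR m) / INR N * INR N) with (r * INR N - INR m)
      by (field; lra). nra.
  - unfold Rdiv. apply Rmult_le_pos; [lra | apply Rlt_le, Rinv_0_lt_compat; lra].
Qed.

Section Powers.
Variable M : PCMonoid.
Implicit Types a b c e : M.

Lemma pcm_mul1r a : pcm_mul a pcm_one = a.
Proof. rewrite (pcm_mulC M). apply pcm_mul1. Qed.

Lemma pcm_le_mul a b c e : pcm_le a b -> pcm_le c e -> pcm_le (pcm_mul a c) (pcm_mul b e).
Proof.
  intros Hab Hce. apply (pcm_trans M _ (pcm_mul b c)); [now apply pcm_mono |].
  rewrite (pcm_mulC M b c), (pcm_mulC M b e). now apply pcm_mono.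
Qed.

Lemma pcm_mulACA a b c e :
  pcm_mul (pcm_mul a b) (pcm_mul c e) = pcm_mul (pcm_mul a c) (pcm_mul b e).
Proof.
  rewrite <- (pcm_mulA M a b), (pcm_mulA M b c e), (pcm_mulC M b c).
  rewrite <- (pcm_mulA M c b e), (pcm_mulA M a c). reflexivity.
Qed.

Lemma pcm_powD a i j : pcm_pow a (i + j) = pcm_mul (pcm_pow a i) (pcm_pow a j).
Proof.
  induction i as [| i IH]; simpl; [now rewrite pcm_mul1 |].
  rewrite IH. apply pcm_mulA.
Qed.

Lemma pcm_powMl a b n : pcm_pow (pcm_mul a b) n = pcm_mul (pcm_pow a n) (pcm_pow b n).
Proof.
  induction n as [| n IH]; simpl; [now rewrite pcm_mul1 |].
  rewrite IH. apply pcm_mulACA.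
Qed.

Lemma pcm_powM a t n : pcm_pow a (t * n) = pcm_pow (pcm_pow a n) t.
Proof.
  induction t as [| t IH]; simpl; [reflexivity |]. now rewrite pcm_powD, IH.
Qed.

Lemma pcm_le_pow a b n : pcm_le a b -> pcm_le (pcm_pow a n) (pcm_pow b n).
Proof.
  intros Hab. induction n as [| n IH]; simpl; [apply pcm_refl | now apply pcm_le_mul].
Qed.

Lemma pcm_le_pow_exp a i j :
  (forall z : M, pcm_ge z pcm_one) -> (i <= j)%nat -> pcm_le (pcm_pow a i) (pcm_pow a j).
Proof.
  intros Hone Hij. replace j with (i + (j - i))%nat by lia. rewrite pcm_powD.
  rewrite <- (pcm_mul1r (pcm_pow a i)) at 1. apply pcm_le_mul; [apply pcm_refl | apply Hone].
Qed.
End Powers.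

Section Achieves.
Variable M : PCMonoid.
Hypothesis Hone : forall z : M, pcm_ge z pcm_one.
Variables g x y : M.

Definition achieves (N d m : nat) : Prop :=
  pcm_ge (pcm_mul (pcm_pow x N) (pcm_pow g d)) (pcm_pow y m).

Lemma achieves_mono N d m N' d' m' :
  (N <= N')%nat -> (d <= d')%nat -> (m' <= m)%nat -> achieves N d m -> achieves N' d' m'.
Proof.
  unfold achieves, pcm_ge. intros HN Hd Hm Hach.
  apply (pcm_trans M _ (pcm_pow y m)); [now apply pcm_le_pow_exp |].
  apply (pcm_trans M _ _ _ Hach).
  apply pcm_le_mul; now apply pcm_le_pow_exp.
Qed.

Lemma achieves_pow t N d m : achieves N d m -> achieves (t * N) (t * d) (t * m).
Proof.
  unfold achieves, pcm_ge. intros Hach.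
  rewrite !pcm_powM, <- pcm_powMl. now apply pcm_le_pow.
Qed.

Lemma achieves_pay k e N d m :
  pcm_ge (pcm_pow g k) y -> achieves N d m -> achieves N (d + k * e) (m + e).
Proof.
  unfold achieves, pcm_ge. intros Hk Hach.
  rewrite !pcm_powD, Nat.mul_comm, pcm_powM, (pcm_mulA M).
  apply pcm_le_mul; [exact Hach | now apply pcm_le_pow].
Qed.

Lemma achieves_scaled k t n d m c :
  pcm_ge (pcm_pow g k) y -> achieves n d m ->
  achieves (t * n) (t * d + k * (c - t * m)) c.
Proof.
  intros Hk Hach.
  apply (achieves_mono (t * n) (t * d + k * (c - t * m)) (t * m + (c - t * m))); try lia.
  apply achieves_pay; [exact Hk |]. now apply achieves_pow.
Qed.
End Achieves.
Arguments achieves {M} g x y N d m.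

Lemma witness_cost_bound (r eps delta1 : R) (m n d : nat) :
  0 < delta1 -> eps <= 1 -> INR m < (r + eps) * INR n ->
  INR d <= delta1 * INR (Nat.max m n) -> INR d <= delta1 * ((r + 2) * INR n).
Proof.
  intros Hdelta1 Heps Hm Hd.
  assert (Hn : 0 <= INR n) by apply pos_INR.
  assert (Hmax : INR (Nat.max m n) <= (r + 2) * INR n).
  { apply Rle_trans with (INR m + INR n); [rewrite <- plus_INR; apply le_INR; lia | nra]. }
  apply Rle_trans with (1 := Hd). apply Rmult_le_compat_l; lra.
Qed.

Lemma scaled_deficit_bound (r eps : R) (t n m : nat) :
  0 <= r -> 0 < eps -> (r - eps) * INR n < INR m ->
  INR (nat_ceil (r * INR (t * n)) - t * m) <= INR t * INR n * eps + 1.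
Proof.
  intros Hr Heps Hm.
  assert (Htn : 0 <= INR t * INR n) by (apply Rmult_le_pos; apply pos_INR).
  destruct (nat_ceil_spec (r * INR (t * n))) as [_ Hc];
    [apply Rmult_le_pos; [lra | apply pos_INR] |].
  set (c := nat_ceil (r * INR (t * n))) in *. rewrite mult_INR in Hc.
  destruct (le_lt_dec (t * m) c) as [Hle | Hlt].
  - rewrite minus_INR, mult_INR by exact Hle.
    assert (INR t * ((r - eps) * INR n) <= INR t * INR m)
      by (apply Rmult_le_compat_l; [apply pos_INR | lra]).
    lra.
  - replace (c - t * m)%nat with 0%nat by lia. simpl. nra.
Qed.

(* Arithmetic for (1) -> (2): given delta and k, one can choose the
   precision of the rate witness (delta1, eps) and a scaling factor t so that
   the g-budget of [achieves_scaled] fits below floor(delta t n): the scaled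
   witness and the deficit each take a quarter of delta t n, and the
   remaining constant k is below half of it. *)
Lemma scaled_budget (r delta : R) (k : nat) :
  0 <= r -> 0 < delta ->
  exists delta1 eps t, 0 < delta1 /\ 0 < eps /\ (1 <= t)%nat /\
  (forall m n d : nat, (1 <= n)%nat ->
    (r - eps) * INR n < INR m < (r + eps) * INR n ->
    INR d <= delta1 * INR (Nat.max m n) ->
    (t * d + k * (nat_ceil (r * INR (t * n)) - t * m)
       <= nat_floor (delta * INR (t * n)))%nat).
Proof.
  intros Hr Hdelta.
  set (K := INR k + 1).
  assert (HK : 0 < K) by (unfold K; generalize (pos_INR k); lra).
  set (eps := Rmin 1 (delta / (4 * K))).
  set (delta1 := delta / (4 * (r + 2))).
  assert (Heps : 0 < eps) by (apply Rmin_glb_lt; [lra | apply Rdiv_lt_0_compat; lra]).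
  assert (Heps1 : eps <= 1) by apply Rmin_l.
  assert (HepsK : K * eps <= delta / 4).
  { assert (eps <= delta / (4 * K)) by apply Rmin_r.
    replace (delta / 4) with (K * (delta / (4 * K))) by (field; lra). nra. }
  assert (Hdelta1 : 0 < delta1) by (apply Rdiv_lt_0_compat; lra).
  destruct (exists_nat_gt (2 * K / delta)) as [t Hlarge].
  assert (HtK : 2 * K < INR t * delta).
  { replace (2 * K) with (2 * K / delta * delta) by (field; lra).
    apply Rmult_lt_compat_r; lra. }
  assert (Ht : (1 <= t)%nat) by (destruct t; [simpl in HtK; lra | lia]).
  assert (Ht1 : 1 <= INR t) by (apply (le_INR 1); exact Ht).
  exists delta1, eps, t. split; [exact Hdelta1 |]. split; [exact Heps |].
  split; [exact Ht |].
  intros m n d Hn [Hm_lo Hm_hi] Hd.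
  assert (Hn1 : 1 <= INR n) by (apply (le_INR 1); lia).
  assert (Hcost : INR d <= INR n * delta / 4).
  { replace (INR n * delta / 4) with (delta1 * ((r + 2) * INR n))
      by (unfold delta1; field; lra).
    now apply (witness_cost_bound r eps delta1 m n d). }
  pose proof (scaled_deficit_bound r eps t n m Hr Heps Hm_lo) as Hdeficit.
  set (e := (nat_ceil (r * INR (t * n)) - t * m)%nat) in *.
  apply le_nat_floor; [rewrite mult_INR; nra |].
  rewrite plus_INR, !mult_INR.
  assert (INR t * INR d <= INR t * (INR n * delta / 4))
    by (apply Rmult_le_compat_l; lra).
  assert (INR k * INR e <= INR k * (INR t * INR n * eps + 1))
    by (apply Rmult_le_compat_l; [apply pos_INR | exact Hdeficit]).
  assert (INR t * INR n * (INR k * eps) <= INR t * INR n * (delta / 4))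
    by (apply Rmult_le_compat_l; [apply Rmult_le_pos; lra | unfold K in HepsK; lra]).
  assert (INR t * delta * 1 <= INR t * delta * INR n)
    by (apply Rmult_le_compat_l; nra).
  unfold K in HtK. lra.
Qed.

Lemma rate_implies_uniform_witness (M : PCMonoid)
  (Hone : forall z : M, pcm_ge z pcm_one) (g : M) (Hg : is_generator g)
  (x y : M) (r : R) (Hr : 0 <= r) :
  regularized_rate g x y r ->
  forall delta : R, 0 < delta ->
    exists n : nat, (1 <= n)%nat /\
      achieves g x y n (nat_floor (delta * INR n)) (nat_ceil (r * INR n)).
Proof.
  intros Hrate delta Hdelta.
  destruct (Hg y) as [k Hk].
  destruct (scaled_budget r delta k Hr Hdelta)
    as (delta1 & eps & t & Hdelta1 & Heps & Ht & Hbudget).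
  destruct (Hrate delta1 Hdelta1 eps Heps) as (m & n & Hn & Hclose & d & Hd & Hach).
  apply Rabs_def2 in Hclose. destruct Hclose as [Hhi Hlo].
  assert (Hn0 : 0 < INR n) by (apply lt_0_INR; lia).
  assert (Hm : INR m = INR m / INR n * INR n) by (field; lra).
  exists (t * n)%nat. split; [lia |].
  apply (achieves_mono M Hone g x y (t * n)
           (t * d + k * (nat_ceil (r * INR (t * n)) - t * m))
           (nat_ceil (r * INR (t * n)))); try lia.
  - apply Hbudget; [lia | split; nra | exact Hd].
  - now apply achieves_scaled.
Qed.

Lemma mul_nat_floor_le (delta : R) (k n : nat) :
  0 <= delta -> INR (k * nat_floor (delta * INR n)) <= delta * INR (k * n).
Proof.
  intros Hdelta.
  destruct (nat_floor_spec (delta * INR n)) as [Hf _];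
    [apply Rmult_le_pos; [lra | apply pos_INR] |].
  rewrite !mult_INR.
  assert (INR k * INR (nat_floor (delta * INR n)) <= INR k * (delta * INR n))
    by (apply Rmult_le_compat_l; [apply pos_INR | exact Hf]).
  lra.
Qed.

Lemma nat_floor_le_mul_ceil (r : R) (k n : nat) :
  0 <= r -> (nat_floor (r * INR (k * n)) <= k * nat_ceil (r * INR n))%nat.
Proof.
  intros Hr.
  destruct (nat_floor_spec (r * INR (k * n))) as [Hf _];
    [apply Rmult_le_pos; [lra | apply pos_INR] |].
  destruct (nat_ceil_spec (r * INR n)) as [Hc _];
    [apply Rmult_le_pos; [lra | apply pos_INR] |].
  set (m := nat_floor (r * INR (k * n))) in *.
  apply INR_le. rewrite mult_INR. rewrite mult_INR in Hf.
  assert (INR k * (r * INR n) <= INR k * INR (nat_ceil (r * INR n)))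
    by (apply Rmult_le_compat_l; [apply pos_INR | exact Hc]).
  lra.
Qed.

Lemma uniform_witness_implies_rate (M : PCMonoid)
  (Hone : forall z : M, pcm_ge z pcm_one) (g x y : M) (r : R) (Hr : 0 <= r) :
  (forall delta : R, 0 < delta ->
    exists n : nat, (1 <= n)%nat /\
      achieves g x y n (nat_floor (delta * INR n)) (nat_ceil (r * INR n))) ->
  regularized_rate g x y r.
Proof.
  intros Hunif delta Hdelta eps Heps.
  destruct (Hunif delta Hdelta) as [n [Hn Hach]].
  destruct (exists_nat_gt (1 / eps)) as [k Hk].
  assert (Hk1 : 1 < eps * INR k).
  { replace 1 with (1 / eps * eps) by (field; lra).
    rewrite (Rmult_comm eps). apply Rmult_lt_compat_r; lra. }
  assert (Hk0 : (1 <= k)%nat) by (destruct k; [simpl in Hk1; lra | lia]).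
  assert (HkN : 1 < eps * INR (k * n)).
  { assert (Hn1 : 1 <= INR n) by (apply (le_INR 1); lia).
    rewrite mult_INR. assert (INR k <= INR k * INR n) by nra. nra. }
  set (m := nat_floor (r * INR (k * n))).
  exists m, (k * n)%nat. split; [lia |]. split; [now apply floor_ratio_close |].
  exists (k * nat_floor (delta * INR n))%nat. split.
  - apply Rle_trans with (delta * INR (k * n)); [apply mul_nat_floor_le; lra |].
    apply Rmult_le_compat_l; [lra | apply le_INR; lia].
  - apply (achieves_mono M Hone g x y (k * n) (k * nat_floor (delta * INR n))
             (k * nat_ceil (r * INR n))); try lia.
    + now apply nat_floor_le_mul_ceil.
    + now apply achieves_pow.
Qed.

Theorem mainTheorem2 (M : PCMonoid)
  (H1 : forall x : M, pcm_ge x pcm_one)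
  (g : M) (Hg : is_generator g)
  (x y : M) (r : R) (Hr : 0 <= r) :
  regularized_rate g x y r <->
  (forall delta : R, 0 < delta ->
     exists n : nat, (1 <= n)%nat /\
       pcm_ge (pcm_mul (pcm_pow x n) (pcm_pow g (nat_floor (delta * INR n))))
              (pcm_pow y (nat_ceil (r * INR n)))).
Proof.
  split.
  - exact (rate_implies_uniform_witness M H1 g Hg x y r Hr).
  - exact (uniform_witness_implies_rate M H1 g x y r Hr).
Qed.
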